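(* Let $w\in\{a,b\}^*$ (with $a\ne b$) satisfy $|w|>7$ and $l(w)=5$. Then every element of $\mathtt{BR}(w)$ is rich if and only if $w$ or its complement $w^c$ is of one of the forms $a^{n_1}ba^{n_3}ba^{n_5}$ (with $n_1,n_3,n_5\ge1$), or $ab^{n_2}ab^{n_4}a^2$, $a^2b^{n_2}ab^{n_4}a$, $ab^{n_2}a^2b^{n_4}a$ with $n_2,n_4\ge1$ and $n_2+n_4=4$.
   Context: For a word $w=w_1\cdots w_n$, $|w|=n$, $w^R=w_n\cdots w_1$; $w$ is a palindrome if $w=w^R$; a factor of $w$ is a word $u$ with $w=puq$. A word $w$ is rich if the number of distinct nonempty palindromic factors of $w$ equals $|w|$. The block reversal of a nonempty word $w$ is $\mathtt{BR}(w)=\{B_t\cdots B_1 : w=B_1\cdots B_t,\ t\ge1,\ \text{each } B_i \text{ nonempty}\}$. Every nonempty word has a unique run-length encoding $w=c_1^{n_1}\cdots c_k^{n_k}$ with letters $c_i\neq c_{i+1}$, $n_i\ge1$; $l(w)=k$. The complement $w^c$ of $w\in\{a,b\}^*$ is obtained by exchanging $a$ and $b$. *)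

From mathcomp Require Import all_boot.
Set Implicit Arguments. Unset Strict Implicit. Unset Printing Implicit Defensive.

Definition la : bool := false.
Definition lb : bool := true.

Definition word := seq bool.

Definition palindrome (w : word) : bool := w == rev w.

Definition factors (w : word) : seq word :=
  [seq take j (drop i w) | i <- iota 0 (size w).+1, j <- iota 0 (size w).+1].

Definition pal_factors (w : word) : seq word :=
  undup [seq u <- factors w | (u != [::]) && palindrome u].

Definition rich (w : word) : Prop := size (pal_factors w) = size w.

Definition inBR (w v : word) : Prop :=
  exists Bs : seq word,
    [/\ 1 <= size Bs, all (fun B => B != [::]) Bs, flatten Bs = w
      & v = flatten (rev Bs)].

Fixpoint rle (w : word) : seq (bool * nat) :=
  match w with
  | [::] => [::]
  | x :: s =>
      match rle s with
      | [::] => [:: (x, 1)]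
      | (y, n) :: r => if x == y then (y, n.+1) :: r else (x, 1) :: (y, n) :: r
      end
  end.

Definition l (w : word) : nat := size (rle w).

Definition compl (w : word) : word := map negb w.

Definition good_form (w : word) : Prop :=
  (exists n1 n3 n5, [/\ 1 <= n1, 1 <= n3, 1 <= n5 &
      w = nseq n1 la ++ [:: lb] ++ nseq n3 la ++ [:: lb] ++ nseq n5 la])
  \/ (exists n2 n4, [/\ 1 <= n2, 1 <= n4, n2 + n4 = 4 &
      [\/ w = [:: la] ++ nseq n2 lb ++ [:: la] ++ nseq n4 lb ++ [:: la; la],
          w = [:: la; la] ++ nseq n2 lb ++ [:: la] ++ nseq n4 lb ++ [:: la]
        | w = [:: la] ++ nseq n2 lb ++ [:: la; la] ++ nseq n4 lb ++ [:: la]]]).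

Example rle_ex : rle [:: la; la; lb; la] = [:: (la,2); (lb,1); (la,1)]. Proof. by []. Qed.
Example rich_ex : size (pal_factors [:: la; lb; la; la]) = 4. Proof. by []. Qed.

From mathcomp Require Import all_boot zify.
Set Implicit Arguments. Unset Strict Implicit. Unset Printing Implicit Defensive.

(* A block reversal permutes the letters of w.  Hence if w has exactly two b's,
   every element of BR(w) has the form a^x b a^y b a^z, which is rich: the
   palindromes a^i, a^i b a^i and a^i b a^y b a^i already number |w|.  The
   nine words of the second family are settled by enumerating all their block
   reversals.
   Conversely, each new letter creates at most one new palindrome (the longest
   palindromic suffix), so the factors of a rich word are rich; and in
   x^(k+1) y^p x^k y^q x^(k+1) with p <> q the last letter creates none.  For
   every other w = a^n1 b^n2 a^n3 b^n4 a^n5 some cutting of w into at most four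
   blocks puts such a factor into the block reversal: uniformly in the n_i as
   soon as a run is long, and found by a search over cuttings for the finitely
   many remaining words. *)

Definition npal (w : word) : nat := size (pal_factors w).

Definition richb (w : word) : bool := npal w == size w.

Lemma richP w : reflect (rich w) (richb w).
Proof. exact: eqP. Qed.

Lemma mem_factors u w : (u \in factors w) = infix u w.
Proof.
apply/allpairsPdep/idP => [[i [j [_ _ ->]]] | /infixP [p [s ->]]].
  apply: (infix_trans (prefixW (prefix_take _ _))).
  by rewrite -{2}(cat_take_drop i w) suffix_infix.
exists (size p), (size u); rewrite !mem_iota !size_cat /=; split; [lia | lia |].
by rewrite drop_size_cat // take_size_cat.
Qed.

Lemma mem_pal_factors u w :
  (u \in pal_factors w) = [&& u != [::], palindrome u & infix u w].
Proof. by rewrite mem_undup mem_filter mem_factors andbA. Qed.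

Lemma npal_le u w : {subset pal_factors u <= pal_factors w} -> npal u <= npal w.
Proof. exact/uniq_leq_size/undup_uniq. Qed.

Lemma npal_eq u w : pal_factors u =i pal_factors w -> npal u = npal w.
Proof. by move=> E; apply/eqP; rewrite eqn_leq !npal_le // => p; rewrite E. Qed.

Lemma rev_palindrome u : palindrome u -> rev u = u.
Proof. by move/eqP. Qed.

Lemma palindrome_compl u : palindrome (compl u) = palindrome u.
Proof. by rewrite /palindrome /compl -map_rev (inj_eq (inj_map negb_inj)). Qed.

Lemma complK : involutive compl.
Proof. by move=> u; rewrite /compl -map_comp (eq_map negbK) map_id. Qed.

Lemma infix_compl u w : infix (compl u) (compl w) = infix u w.
Proof.
apply/infixP/infixP => [[p [s E]] | [p [s ->]]]; last first.
  by exists (compl p), (compl s); rewrite /compl !map_cat.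
exists (compl p), (compl s).
by rewrite -(complK w) E /compl !map_cat -!map_comp !(eq_map negbK) !map_id.
Qed.

Lemma npal_rev w : npal (rev w) = npal w.
Proof.
apply: npal_eq => u; rewrite !mem_pal_factors.
case: (boolP (palindrome u)) => Pu; rewrite ?andbF //=.
by rewrite -infix_rev (rev_palindrome Pu) revK.
Qed.

Lemma npal_compl w : npal (compl w) = npal w.
Proof.
rewrite /npal -(size_map compl (pal_factors w)); apply/perm_size/uniq_perm.
- exact: undup_uniq.
- by rewrite (map_inj_uniq (can_inj complK)) undup_uniq.
move=> u; rewrite -[in RHS](complK u) (mem_map (can_inj complK)) !mem_pal_factors.
by rewrite -infix_compl complK palindrome_compl /compl -!size_eq0 size_map.
Qed.

Lemma rich_rev w : rich (rev w) <-> rich w.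
Proof. by rewrite /rich -/(npal _) -/(npal w) npal_rev size_rev. Qed.

Lemma rich_compl w : rich (compl w) <-> rich w.
Proof. by rewrite /rich -/(npal _) -/(npal w) npal_compl /compl size_map. Qed.

Lemma suffix_of_suffixes (p q s : word) :
  suffix p s -> suffix q s -> size p <= size q -> suffix p q.
Proof.
move=> Sp Sq le_pq.
have le_ps : size p <= size s by case/suffixP: Sp => ? ->; rewrite size_cat leq_addl.
have le_qs : size q <= size s by case/suffixP: Sq => ? ->; rewrite size_cat leq_addl.
move: Sp Sq; rewrite -!prefix_rev !prefixE !size_rev => /eqP <- /eqP <-.
by rewrite take_takel.
Qed.

Lemma palindrome_suffix_infix u z p q : palindrome p -> palindrome q ->
  suffix p (rcons u z) -> suffix q (rcons u z) -> size p < size q -> infix p u.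
Proof.
move=> Pp Pq Sp Sq lt_pq.
have /prefixP [t Eq] : prefix p q.
  rewrite -suffix_rev !rev_palindrome //.
  exact: suffix_of_suffixes Sp Sq (ltnW lt_pq).
case/lastP: t Eq => [|t y] Eq; first by rewrite Eq cats0 ltnn in lt_pq.
by move: Sq; rewrite Eq -rcons_cat suffix_rcons => /andP [_ /suffixW/catr_infix].
Qed.

Lemma mem_pal_factors_rcons u z p : p \in pal_factors (rcons u z) ->
  p \in pal_factors u \/ [/\ palindrome p, suffix p (rcons u z) & ~~ infix p u].
Proof.
rewrite !mem_pal_factors infix_rconsl => /and3P [-> -> /orP [Sp | ->]]; last by left.
by case: (boolP (infix p u)) => Ip; [left | right].
Qed.

Lemma npal_rcons u z : npal (rcons u z) <= (npal u).+1.
Proof.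
have [/hasP [p] | /hasPn old] :=
  boolP (has (fun p => ~~ infix p u) (pal_factors (rcons u z))).
  case/mem_pal_factors_rcons => [|[Pp Sp Np] _].
    by rewrite mem_pal_factors => /and3P [_ _ ->].
  apply: (@uniq_leq_size _ _ (p :: pal_factors u)) => [|q]; first exact: undup_uniq.
  case/mem_pal_factors_rcons => [Pq | [Pq Sq Nq]]; rewrite inE ?Pq ?orbT //.
  have [lt_qp | le_pq] := ltnP (size q) (size p).
    by rewrite (palindrome_suffix_infix Pq Pp Sq Sp lt_qp) in Nq.
  have [lt_pq | le_qp] := ltnP (size p) (size q).
    by rewrite (palindrome_suffix_infix Pp Pq Sp Sq lt_pq) in Np.
  have /suffixP [t Ep] := suffix_of_suffixes Sq Sp le_qp.
  have /size0nil t0 : size t = 0 by move/(congr1 size): Ep; rewrite size_cat; lia.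
  by rewrite Ep t0 eqxx.
apply/leqW/npal_le => p Pp; have /negPn Ip := old p Pp.
by move: Pp; rewrite !mem_pal_factors Ip andbT => /and3P [-> -> _].
Qed.

Lemma npal_rcons_no_new u z :
  (forall p, palindrome p -> suffix p (rcons u z) -> infix p u) ->
  npal (rcons u z) <= npal u.
Proof.
move=> old; apply: npal_le => p /mem_pal_factors_rcons [//| [Pp Sp /negP []]].
exact: old.
Qed.

Lemma npal_catr u v : npal (u ++ v) <= npal u + size v.
Proof.
elim/last_ind: v => [|v z IHv]; first by rewrite cats0 addn0.
by rewrite -rcons_cat size_rcons addnS (leq_trans (npal_rcons _ _)).
Qed.

Lemma npal_size w : npal w <= size w.
Proof. exact: npal_catr [::] w. Qed.

Lemma npal_catl u v : npal (u ++ v) <= size u + npal v.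
Proof. by rewrite -npal_rev rev_cat -(npal_rev v) -(size_rev u) addnC npal_catr. Qed.

Lemma rich_infix r w : infix r w -> rich w -> rich r.
Proof.
case/infixP => p [s ->]; rewrite /rich -!/(npal _) !size_cat => rich_w.
apply/eqP; rewrite eqn_leq npal_size -(leq_add2r (size s)) -(leq_add2l (size p)).
by rewrite -rich_w (leq_trans (npal_catl _ _)) ?leq_add2l ?npal_catr.
Qed.

Definition runs5 (x : bool) n1 n2 n3 n4 n5 : word :=
  nseq n1 x ++ nseq n2 (~~ x) ++ nseq n3 x ++ nseq n4 (~~ x) ++ nseq n5 x.

Lemma size_runs5 x n1 n2 n3 n4 n5 :
  size (runs5 x n1 n2 n3 n4 n5) = n1 + n2 + n3 + n4 + n5.
Proof. by rewrite /runs5 !size_cat !size_nseq !addnA. Qed.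

Lemma rev_runs5 x n1 n2 n3 n4 n5 :
  rev (runs5 x n1 n2 n3 n4 n5) = runs5 x n5 n4 n3 n2 n1.
Proof. by rewrite /runs5 !rev_cat !rev_nseq -!catA. Qed.

Lemma nth_runs5 x n1 n2 n3 n4 n5 j :
  nth x (runs5 x n1 n2 n3 n4 n5) j =
  ((n1 <= j < n1 + n2) || (n1 + n2 + n3 <= j < n1 + n2 + n3 + n4)) (+) x.
Proof.
rewrite /runs5 !nth_cat !size_nseq !nth_nseq.
by repeat case: ifP => ?; case: x; lia.
Qed.

Lemma nth_palindrome (s : word) x i : palindrome s -> i < size s ->
  nth x s i = nth x s (size s - i.+1).
Proof. by move=> Ps lt_is; rewrite -[in LHS](rev_palindrome Ps) nth_rev. Qed.

(* A palindromic suffix longer than k+1 begins, like it ends, with x^(k+1) y;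
   this factor occurs only at the start, and the whole word is no palindrome. *)
Lemma runs5_pal_suffix_infix x k p q (s : word) : 0 < k -> 0 < p -> 0 < q -> p != q ->
  palindrome s -> suffix s (runs5 x k.+1 p k q k.+1) -> infix s (runs5 x k.+1 p k q k).
Proof.
move=> k_gt0 p_gt0 q_gt0 neq_pq Ps Ss; set c := k.+1; set r := runs5 x c p k q c.
have size_r : size r = c + p + k + q + c by rewrite size_runs5.
set d := size r - size s.
have Es : s = drop d r by move: Ss; rewrite suffixE => /eqP.
have le_sr : size s <= size r by rewrite {1}Es size_drop leq_subr.
have pal_sym i : i < size s ->
  ((c <= d + i < c + p) || (c + p + k <= d + i < c + p + k + q)) =
  ((c <= size r - i.+1 < c + p) || (c + p + k <= size r - i.+1 < c + p + k + q)).
  move=> lt_is; apply: (@addIb x); rewrite -!(nth_runs5 x c p k q c) -/r -nth_drop -Es.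
  rewrite (nth_palindrome x Ps lt_is) Es nth_drop size_drop; congr nth; lia.
case: (leqP (size s) c) => [le_sc | lt_cs].
  have -> : s = nseq (size s) x.
    apply: (@eq_from_nth _ x); rewrite ?size_nseq // => i lt_is.
    rewrite nth_nseq lt_is Es nth_drop nth_runs5 (_ : _ || _ = false) //; lia.
  by rewrite /runs5 -(subnKC le_sc) nseqD -catA prefix_infix.
exfalso; have def_c : c = k.+1 by []; have def_d : d = size r - size s by [].
have at_c : (c <= d + c < c + p) || (c + p + k <= d + c < c + p + k + q).
  by rewrite pal_sym //; lia.
have at_0 : ~~ ((c <= d + 0 < c + p) || (c + p + k <= d + 0 < c + p + k + q)).
  by rewrite pal_sym ?(ltn_trans (ltn0Sn k) lt_cs) //; lia.
case: (posnP d) => [d0 | d_gt0].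
  move: neq_pq; rewrite neq_ltn => /orP [lt_pq | lt_qp].
    by have := pal_sym (c + p); rewrite d0; lia.
  by have := pal_sym (c + q); rewrite d0; lia.
case: (leqP d c) => le_dc.
  by have := pal_sym (c - d); lia.
by have := pal_sym (c + p + k - d); lia.
Qed.

Lemma runs5_not_rich x k p q : 0 < k -> 0 < p -> 0 < q -> p != q ->
  ~ rich (runs5 x k.+1 p k q k.+1).
Proof.
move=> k_gt0 p_gt0 q_gt0 neq_pq; pose u := runs5 x k.+1 p k q k.
have Er : runs5 x k.+1 p k q k.+1 = rcons u x.
  by rewrite /u /runs5 -!cats1 -!catA -[[:: x]]/(nseq 1 x) -nseqD addn1.
have no_new : npal (rcons u x) <= npal u.
  by apply: npal_rcons_no_new => s Ps; rewrite -Er; exact: runs5_pal_suffix_infix.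
rewrite /rich -/(npal _) Er size_rcons => rich_ux.
by have := npal_size u; lia.
Qed.

Lemma not_rich_runs5_infix x c1 p k q c5 (P S : word) :
  0 < k -> k < c1 -> k < c5 -> 0 < p -> 0 < q -> p != q ->
  ~ rich (P ++ runs5 x c1 p k q c5 ++ S).
Proof.
move=> k_gt0 lt_k1 lt_k5 p_gt0 q_gt0 neq_pq rich_w.
apply: (runs5_not_rich k_gt0 p_gt0 q_gt0 neq_pq); apply: rich_infix rich_w.
apply/infixP; exists (P ++ nseq (c1 - k.+1) x), (nseq (c5 - k.+1) x ++ S).
by rewrite /runs5 -{1}(subnK lt_k1) -{1}(subnKC lt_k5) !nseqD -!catA.
Qed.

Lemma inBR_rev w v : inBR w v -> inBR (rev w) (rev v).
Proof.
case=> Bs [size_Bs Bs_nil <- ->]; exists (rev (map rev Bs)); split.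
- by rewrite size_rev size_map.
- rewrite all_rev all_map; apply: sub_all Bs_nil => B.
  by rewrite /= -!size_eq0 size_rev.
- by rewrite rev_flatten.
- by rewrite rev_flatten map_rev !revK.
Qed.

Lemma inBR_compl w v : inBR w v -> inBR (compl w) (compl v).
Proof.
case=> Bs [size_Bs Bs_nil <- ->]; exists (map compl Bs); split.
- by rewrite size_map.
- by rewrite all_map; apply: sub_all Bs_nil => B; rewrite /= /compl -!size_eq0 size_map.
- by rewrite /compl map_flatten.
- by rewrite /compl map_flatten map_rev.
Qed.

Lemma inBR_perm w v : inBR w v -> perm_eq v w.
Proof. by case=> Bs [_ _ <- ->]; apply/perm_flatten; rewrite perm_rev. Qed.

Definition nonrichBR (w : word) : Prop := exists2 v, inBR w v & ~ rich v.

Lemma nonrichBR_rev w : nonrichBR (rev w) -> nonrichBR w.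
Proof.
case=> v /inBR_rev; rewrite revK => BRv; rewrite -rich_rev => Nv.
by exists (rev v).
Qed.

Fixpoint compositions k n : seq (seq nat) :=
  if n is 0 then [:: [::]] else
  if k is k'.+1 then [seq i :: ls | i <- iota 1 n, ls <- compositions k' (n - i)]
  else [::].

Lemma mem_compositions k n ls :
  (ls \in compositions k n) = [&& all (leq 1) ls, sumn ls == n & size ls <= k].
Proof.
elim: k n ls => [|k IHk] [|n] ls; try by case: ls => [|[|l] ls]; rewrite //= ?andbF.
have -> : compositions k.+1 n.+1 =
  [seq i :: ls | i <- iota 1 n.+1, ls <- compositions k (n.+1 - i)] by [].
apply/allpairsPdep/idP => [[i [ls' [+ + ->]]] | ].
  by rewrite mem_iota IHk => /andP [i_gt0 lt_i] /and3P [/= -> /eqP ->]; lia.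
case: ls => [|l ls] /and3P [] // /andP [l_gt0 ls_pos] /eqP sum_ls le_ls.
rewrite /= in sum_ls le_ls; exists l, ls; split => //; first by rewrite mem_iota; lia.
by rewrite IHk; apply/and3P; split => //; apply/eqP; lia.
Qed.

Fixpoint blocks (ls : seq nat) (w : word) : seq word :=
  if ls is l :: ls' then take l w :: blocks ls' (drop l w) else [::].

Definition block_reversal ls w : word := flatten (rev (blocks ls w)).

Lemma blocks_flatten (Bs : seq word) : blocks (map size Bs) (flatten Bs) = Bs.
Proof. by elim: Bs => //= B Bs IHBs; rewrite take_size_cat ?drop_size_cat ?IHBs. Qed.

Lemma flatten_blocks ls w : sumn ls = size w -> flatten (blocks ls w) = w.
Proof.
elim: ls w => [|l ls IHls] w /=; first by move/esym/size0nil.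
by move=> sum_ls; rewrite IHls ?cat_take_drop // size_drop -sum_ls addKn.
Qed.

Lemma blocks_nonempty ls w : all (leq 1) ls -> sumn ls = size w ->
  all (fun B => B != [::]) (blocks ls w).
Proof.
elim: ls w => //= l ls IHls w /andP [l_gt0 ls_pos] sum_ls.
rewrite -size_eq0 size_take IHls // ?size_drop -?sum_ls ?addKn //.
by case: ltnP; lia.
Qed.

Lemma inBR_block_reversal ls w : ls \in compositions (size w) (size w) ->
  0 < size w -> inBR w (block_reversal ls w).
Proof.
rewrite mem_compositions => /and3P [ls_pos /eqP sum_ls _] w_gt0.
exists (blocks ls w); split; rewrite ?flatten_blocks ?blocks_nonempty //.
by case: ls sum_ls {ls_pos} => //= sum0; rewrite -sum0 in w_gt0.
Qed.

Lemma inBR_compositions w v : inBR w v ->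
  exists2 ls, ls \in compositions (size w) (size w) & v = block_reversal ls w.
Proof.
case=> Bs [_ Bs_nil <- ->].
exists (map size Bs); last by rewrite /block_reversal blocks_flatten.
have sizes_pos : all (leq 1) (map size Bs).
  by rewrite all_map; apply: sub_all Bs_nil => B; rewrite /= lt0n size_eq0.
rewrite mem_compositions sizes_pos size_flatten eqxx /shape /=.
elim: Bs {Bs_nil} sizes_pos => //= B Bs IHBs /andP [B_gt0 /IHBs]; lia.
Qed.

Definition all_BR_rich w : bool :=
  all (fun ls => richb (block_reversal ls w)) (compositions (size w) (size w)).

Lemma all_BR_richP w : all_BR_rich w -> forall v, inBR w v -> rich v.
Proof.
by move=> /allP all_rich v /inBR_compositions [ls /all_rich /richP ? ->].
Qed.

(* [find] rather than [has]: [has] is strict under [vm_compute] and would test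
   every cutting instead of stopping at the first witness. *)
Definition has_nonrich_BR k w : bool :=
  let cs := compositions k (size w) in
  find (fun ls => ~~ richb (block_reversal ls w)) cs < size cs.

Lemma has_nonrich_BR_sound k w : k <= size w -> 0 < size w ->
  has_nonrich_BR k w -> nonrichBR w.
Proof.
rewrite /has_nonrich_BR -has_find => le_kw w_gt0 /hasP [ls].
rewrite mem_compositions => /and3P [ls_pos sum_ls le_ls] /richP nonrich.
exists (block_reversal ls w) => //; apply: inBR_block_reversal => //.
by rewrite mem_compositions ls_pos sum_ls (leq_trans le_ls).
Qed.

Lemma nonrichBR_blocks w (Bs : seq word) x c1 p k q c5 (P S : word) :
  flatten Bs = w -> all (fun B => B != [::]) Bs ->
  flatten (rev Bs) = P ++ runs5 x c1 p k q c5 ++ S ->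
  0 < k -> k < c1 -> k < c5 -> 0 < p -> 0 < q -> p != q ->
  nonrichBR w.
Proof.
move=> <- Bs_nil E k_gt0 lt_k1 lt_k5 p_gt0 q_gt0 neq_pq.
exists (flatten (rev Bs)); last by rewrite E; apply: not_rich_runs5_infix.
exists Bs; split => //; case: Bs {Bs_nil} E => [|//] /(congr1 size).
by rewrite size_cat size_cat size_runs5 /=; lia.
Qed.

(* In the names below, a digit i stands for a cut inside the i-th run of
   [runs5 x n1 n2 n3 n4 n5] and a pair ij for the cut between runs i and j. *)

Ltac solve_blocks :=
  rewrite /= ?negbK -?size_eq0 ?size_cat ?size_nseq; try lia;
  rewrite /runs5 ?negbK ?cats0 ?nseqD -?catA //.

Lemma nonrichBR_cuts_1_4 x e1 s n2 n3 t e4 n5 :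
  0 < n2 -> 0 < n3 -> 0 < t -> 0 < n5 -> n3 < e1 -> n3 < n5 + s -> t != n2 ->
  nonrichBR (runs5 x (e1 + s) n2 n3 (t + e4) n5).
Proof.
move=> *.
apply: (@nonrichBR_blocks _
  [:: nseq e1 x; nseq s x ++ nseq n2 (~~ x) ++ nseq n3 x ++ nseq t (~~ x);
      nseq e4 (~~ x) ++ nseq n5 x]
  x (n5 + s) n2 n3 t e1 (nseq e4 (~~ x)) [::]); solve_blocks.
Qed.

Lemma nonrichBR_cuts_2_3 x n1 j e2 i e3 n4 n5 :
  0 < n1 -> 0 < n4 -> 0 < n5 -> 0 < e2 -> n5 < e3 -> n5 < i + n1 -> e2 != n4 ->
  nonrichBR (runs5 x n1 (j + e2) (i + e3) n4 n5).
Proof.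
move=> *.
apply: (@nonrichBR_blocks _
  [:: nseq n1 x ++ nseq j (~~ x); nseq e2 (~~ x) ++ nseq i x;
      nseq e3 x ++ nseq n4 (~~ x) ++ nseq n5 x]
  x e3 n4 n5 e2 (i + n1) [::] (nseq j (~~ x))); solve_blocks.
Qed.

Lemma nonrichBR_cuts_1_2_45 x e1 e2 n3 n4 n5 :
  1 < n3 -> 1 < e1 -> n4 != 1 -> 0 < n4 -> 0 < n5 ->
  nonrichBR (runs5 x (e1 + 1) (1 + e2) n3 n4 n5).
Proof.
move=> *.
apply: (@nonrichBR_blocks _
  [:: nseq e1 x; [:: x; ~~ x]; nseq e2 (~~ x) ++ nseq n3 x ++ nseq n4 (~~ x);
      nseq n5 x]
  x n3 n4 1 1 e1 (nseq n5 x ++ nseq e2 (~~ x)) [::]); solve_blocks.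
Qed.

Lemma nonrichBR_cuts_1_23_45 x e1 n2 n3 n4 n5 :
  0 < n2 -> 0 < n3 -> 0 < n4 -> 0 < n5 -> 1 < n5 + n3 -> 1 < e1 -> n4 != n2 ->
  nonrichBR (runs5 x (e1 + 1) n2 n3 n4 n5).
Proof.
move=> *.
apply: (@nonrichBR_blocks _
  [:: nseq e1 x; x :: nseq n2 (~~ x); nseq n3 x ++ nseq n4 (~~ x); nseq n5 x]
  x (n5 + n3) n4 1 n2 e1 [::] [::]); solve_blocks.
Qed.

Lemma nonrichBR_cuts_4 x n1 n2 n3 j e4 n5 :
  0 < n2 -> 0 < n3 -> 0 < n5 -> n2 < e4 -> n2 < j -> n5 + n1 != n3 ->
  nonrichBR (runs5 x n1 n2 n3 (j + e4) n5).
Proof.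
move=> *.
apply: (@nonrichBR_blocks _
  [:: nseq n1 x ++ nseq n2 (~~ x) ++ nseq n3 x ++ nseq j (~~ x);
      nseq e4 (~~ x) ++ nseq n5 x]
  (~~ x) e4 (n5 + n1) n2 n3 j [::] [::]); solve_blocks.
Qed.

Lemma nonrichBR_cuts_23_4 x n1 n2 n3 e4 n5 :
  0 < n1 -> 0 < n3 -> 0 < n5 -> 1 < e4 -> 1 < n2 -> n5 + n3 != n1 ->
  nonrichBR (runs5 x n1 n2 n3 (1 + e4) n5).
Proof.
move=> *.
apply: (@nonrichBR_blocks _
  [:: nseq n1 x ++ nseq n2 (~~ x); nseq n3 x ++ [:: ~~ x]; nseq e4 (~~ x) ++ nseq n5 x]
  (~~ x) e4 (n5 + n3) 1 n1 n2 [::] [::]); solve_blocks.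
Qed.

Lemma nonrichBR_cuts_12_4 x n1 n2 n3 j e4 n5 :
  0 < n1 -> 0 < n2 -> 0 < n3 -> 0 < n5 -> n2 < e4 -> n2 < j -> n5 != n3 ->
  nonrichBR (runs5 x n1 n2 n3 (j + e4) n5).
Proof.
move=> *.
apply: (@nonrichBR_blocks _
  [:: nseq n1 x; nseq n2 (~~ x) ++ nseq n3 x ++ nseq j (~~ x);
      nseq e4 (~~ x) ++ nseq n5 x]
  (~~ x) e4 n5 n2 n3 j [::] (nseq n1 x)); solve_blocks.
Qed.

Lemma infix_nseq_cat (c : bool) i j m n u : i <= m -> j <= n ->
  infix (nseq i c ++ u ++ nseq j c) (nseq m c ++ u ++ nseq n c).
Proof.
move=> le_im le_jn; apply/infixP; exists (nseq (m - i) c), (nseq (n - j) c).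
by rewrite -{1}(subnK le_im) -{1}(subnKC le_jn) !nseqD -!catA.
Qed.

Lemma palindrome_nseq_cat (c : bool) i u :
  palindrome u -> palindrome (nseq i c ++ u ++ nseq i c).
Proof.
by move=> /rev_palindrome Pu; rewrite /palindrome !rev_cat rev_nseq Pu catA.
Qed.

Section TwoMarks.

Variables (c : bool) (x y z : nat).

Let w := runs5 c x 1 y 1 z.

Lemma mem_pal_factors_nseq i : i < maxn x (maxn y z) -> nseq i.+1 c \in pal_factors w.
Proof.
rewrite mem_pal_factors /palindrome rev_nseq eqxx -size_eq0 size_nseq /=.
have run_infix m : i < m -> infix (nseq i.+1 c) (nseq m c).
  by move=> lt_im; have := infix_nseq_cat c [::] lt_im (leqnn 0); rewrite /= !cats0.
rewrite /w /runs5 !leq_max => /or3P [/run_infix | /run_infix | /run_infix] run_i.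
- exact: infix_catr run_i.
- by apply/infix_catl/infix_catl/infix_catr.
- by apply/infix_catl/infix_catl/infix_catl/infix_catl.
Qed.

Lemma mem_pal_factors_one_mark i : i <= maxn (minn x y) (minn y z) ->
  nseq i c ++ [:: ~~ c] ++ nseq i c \in pal_factors w.
Proof.
have ne_nil : nseq i c ++ [:: ~~ c] ++ nseq i c != [::] by case: i.
rewrite mem_pal_factors ne_nil (palindrome_nseq_cat c i (eqxx [:: ~~ c])) !andTb.
rewrite /w /runs5 leq_max !leq_min.
case/orP => [/andP [le_ix le_iy] | /andP [le_iy le_iz]].
  apply: infix_trans (infix_nseq_cat c [:: ~~ c] le_ix le_iy) _.
  by apply/infixP; exists [::], (nseq 1 (~~ c) ++ nseq z c); rewrite -!catA.
apply: infix_trans (infix_nseq_cat c [:: ~~ c] le_iy le_iz) _.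
by do 2!apply: infix_catl; apply: infix_refl.
Qed.

Lemma mem_pal_factors_two_marks i : i <= minn x z ->
  runs5 c i 1 y 1 i \in pal_factors w.
Proof.
rewrite mem_pal_factors leq_min => /andP [le_ix le_iz].
rewrite /palindrome rev_runs5 eqxx -size_eq0 size_runs5 addn1 /=.
have := infix_nseq_cat c (nseq 1 (~~ c) ++ nseq y c ++ nseq 1 (~~ c)) le_ix le_iz.
by rewrite /w /runs5 -!catA.
Qed.

Lemma runs5_two_marks_rich : rich w.
Proof.
set M := maxn x (maxn y z); set K := maxn (minn x y) (minn y z).
pose f1 i := nseq i.+1 c; pose f2 i := nseq i c ++ [:: ~~ c] ++ nseq i c.
pose f3 i := runs5 c i 1 y 1 i.
set L := map f1 (iota 0 M) ++ map f2 (iota 0 K.+1) ++ map f3 (iota 0 (minn x z).+1).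
have size_L : size L = size w.
  by rewrite /w size_runs5 !size_cat !size_map !size_iota /M /K; lia.
pose marks u := count_mem (~~ c) u.
have marks1 i : marks (f1 i) = 0 by rewrite /marks count_nseq; case: (c).
have marks2 i : marks (f2 i) = 1 by rewrite /marks !count_cat !count_nseq; case: (c).
have marks3 i : marks (f3 i) = 2 by rewrite /marks !count_cat !count_nseq; case: (c).
have uniq_L : uniq L.
  have inj1 : injective f1 by move=> i j /(congr1 size); rewrite !size_nseq => -[].
  have inj2 : injective f2.
    by move=> i j /(congr1 size); rewrite !size_cat !size_nseq /=; lia.
  have inj3 : injective f3 by move=> i j /(congr1 size); rewrite !size_runs5; lia.
  rewrite !cat_uniq (map_inj_uniq inj1) (map_inj_uniq inj2) (map_inj_uniq inj3).
  rewrite !iota_uniq !andTb andbT; apply/andP; split.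
    apply/hasPn => u; rewrite mem_cat => /orP [] /mapP [i _ ->];
      apply/mapP => [[j _ /(congr1 marks)]]; by rewrite ?marks1 ?marks2 ?marks3.
  apply/hasPn => u /mapP [i _ ->]; apply/mapP => [[j _ /(congr1 marks)]].
  by rewrite marks2 marks3.
apply/richP; rewrite /richb eqn_leq npal_size -size_L.
apply: uniq_leq_size uniq_L _ => u; rewrite !mem_cat.
case/or3P => /mapP [i]; rewrite mem_iota => /andP [_ lt_i] ->.
- exact: mem_pal_factors_nseq.
- exact: mem_pal_factors_one_mark.
- exact: mem_pal_factors_two_marks.
Qed.

End TwoMarks.

Lemma count_mem_negb0 (c : bool) (v : word) :
  count_mem (~~ c) v = 0 -> v = nseq (size v) c.
Proof. by elim: v => //= b v IHv; move: IHv; case: b; case: c => //= IHv /IHv <-. Qed.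

Lemma count_mem_negbS (c : bool) (v : word) n : count_mem (~~ c) v = n.+1 ->
  exists i v', v = nseq i c ++ ~~ c :: v' /\ count_mem (~~ c) v' = n.
Proof.
elim: v => //= b v IHv; have [-> [] | neq_bc] := eqVneq b (~~ c).
  by exists 0, v.
have -> : b = c by move: neq_bc; case: (b); case: (c).
by rewrite add0n => /IHv [i [v' [-> count_v']]]; exists i.+1, v'.
Qed.

Lemma BR_two_marks_rich c n1 n3 n5 v :
  inBR (runs5 c n1 1 n3 1 n5) v -> rich v.
Proof.
have marks2 : count_mem (~~ c) (runs5 c n1 1 n3 1 n5) = 2.
  by rewrite /runs5 !count_cat !count_nseq; case: (c) => /=; lia.
move/inBR_perm/permP/(_ (pred1 (~~ c))); rewrite marks2.
case/count_mem_negbS => i [v1 [-> /count_mem_negbS [j [v2 [-> /count_mem_negb0 ->]]]]].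
exact: runs5_two_marks_rich.
Qed.

Lemma nonrichBR_mirror x n1 n2 n3 n4 n5 :
  nonrichBR (runs5 x n5 n4 n3 n2 n1) -> nonrichBR (runs5 x n1 n2 n3 n4 n5).
Proof. by move=> nr; apply: nonrichBR_rev; rewrite rev_runs5. Qed.

Lemma nonrichBR_long_run1 x n1 n2 n3 n4 n5 :
  0 < n2 -> 0 < n3 -> 0 < n4 -> 0 < n5 -> 3 <= n1 -> ~~ ((n2 == 1) && (n4 == 1)) ->
  nonrichBR (runs5 x n1 n2 n3 n4 n5).
Proof.
move=> n2_gt0 n3_gt0 n4_gt0 n5_gt0 n1_ge3 not_11.
have [eq_42 | neq_42] := eqVneq n4 n2; last first.
  have -> : n1 = (n1 - 1) + 1 by lia.
  by apply: nonrichBR_cuts_1_23_45; lia.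
subst n4; have -> : n2 = 1 + (n2 - 1) by lia.
have [n3_ge2 | n3_1] := leqP 2 n3.
  have -> : n1 = (n1 - 1) + 1 by lia.
  by apply: nonrichBR_cuts_1_2_45; lia.
have -> : n1 = 2 + (n1 - 2) by lia.
by apply: nonrichBR_cuts_1_4; lia.
Qed.

Lemma nonrichBR_long_run4 x n1 n2 n3 n4 n5 :
  0 < n1 -> 0 < n2 -> 0 < n3 -> 0 < n5 -> 6 <= n4 ->
  nonrichBR (runs5 x n1 n2 n3 n4 n5).
Proof.
move=> n1_gt0 n2_gt0 n3_gt0 n5_gt0 n4_ge6.
have [n2_ge2 | n2_1] := leqP 2 n2.
  have [n1E | ?] := eqVneq n1 (n3 + n5); last first.
    have -> : n4 = 1 + (n4 - 1) by lia.
    by apply: nonrichBR_cuts_23_4; lia.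
  have [n2_ge3 | n2_2] := leqP 3 n2.
    apply: nonrichBR_mirror; have -> : n2 = 1 + (n2 - 1) by lia.
    by apply: nonrichBR_cuts_23_4; lia.
  have -> : n4 = 3 + (n4 - 3) by lia.
  by apply: nonrichBR_cuts_4; lia.
have -> : n4 = 2 + (n4 - 2) by lia.
have [n3E | ?] := eqVneq n3 (n5 + n1).
  by apply: nonrichBR_cuts_12_4; lia.
by apply: nonrichBR_cuts_4; lia.
Qed.

Lemma nonrichBR_long_run3 x n1 n2 n3 n4 n5 :
  0 < n1 -> 0 < n2 -> 0 < n4 -> 0 < n5 -> n1 <= 2 -> n5 <= 2 -> 4 <= n3 ->
  ~~ ((n2 == 1) && (n4 == 1)) -> nonrichBR (runs5 x n1 n2 n3 n4 n5).
Proof.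
wlog le_n5 : n1 n2 n4 n5 / 2 * n5 + 2 <= n1 + n3.
  move=> gen n1_gt0 n2_gt0 n4_gt0 n5_gt0 n1_le2 n5_le2 n3_ge4 not_11.
  have [le_n5 | lt_n5] := leqP (2 * n5 + 2) (n1 + n3); first exact: gen.
  by apply/nonrichBR_mirror/gen; rewrite 1?andbC //; lia.
move=> n1_gt0 n2_gt0 n4_gt0 n5_gt0 n1_le2 n5_le2 n3_ge4 not_11.
have -> : n3 = (n3 - n5 - 1) + (n5 + 1) by lia.
have [eq_24 | neq_24] := eqVneq n2 n4; last first.
  by rewrite -[n2]add0n; apply: nonrichBR_cuts_2_3; lia.
subst n2; have -> : n4 = (n4 - 1) + 1 by lia.
by apply: nonrichBR_cuts_2_3; lia.
Qed.

Definition good_runs n1 n2 n3 n4 n5 : bool :=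
  (n2 == 1) && (n4 == 1) || (n2 + n4 == 4) && (n1 + n3 + n5 == 4).

(* The lazy [if] skips the search for the good words, where it would fail only
   after trying every cutting. *)
Lemma small_runs5_nonrichBR_check :
  all (fun n1 => all (fun n2 => all (fun n3 => all (fun n4 => all (fun n5 =>
    if good_runs n1 n2 n3 n4 n5 || (n1 + n2 + n3 + n4 + n5 < 8) then true
    else has_nonrich_BR 4 (runs5 la n1 n2 n3 n4 n5))
  (iota 1 2)) (iota 1 5)) (iota 1 3)) (iota 1 5)) (iota 1 2).
Proof. by vm_compute. Qed.

Lemma small_runs5_nonrichBR n1 n2 n3 n4 n5 :
  0 < n1 <= 2 -> 0 < n2 <= 5 -> 0 < n3 <= 3 -> 0 < n4 <= 5 -> 0 < n5 <= 2 ->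
  8 <= n1 + n2 + n3 + n4 + n5 -> ~~ good_runs n1 n2 n3 n4 n5 ->
  nonrichBR (runs5 la n1 n2 n3 n4 n5).
Proof.
move=> n1P n2P n3P n4P n5P size_ge8 not_good.
have in_range k m : 0 < k <= m -> k \in iota 1 m by rewrite mem_iota; lia.
have := small_runs5_nonrichBR_check.
move=> /allP/(_ n1 (in_range _ _ n1P))/allP/(_ n2 (in_range _ _ n2P)).
move=> /allP/(_ n3 (in_range _ _ n3P))/allP/(_ n4 (in_range _ _ n4P)).
move=> /allP/(_ n5 (in_range _ _ n5P)); rewrite (negbTE not_good) ltnNge size_ge8 /=.
by apply: has_nonrich_BR_sound; rewrite size_runs5; lia.
Qed.

Lemma nonrichBR_not_good n1 n2 n3 n4 n5 :
  0 < n1 -> 0 < n2 -> 0 < n3 -> 0 < n4 -> 0 < n5 ->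
  8 <= n1 + n2 + n3 + n4 + n5 -> ~~ good_runs n1 n2 n3 n4 n5 ->
  nonrichBR (runs5 la n1 n2 n3 n4 n5).
Proof.
move=> n1_gt0 n2_gt0 n3_gt0 n4_gt0 n5_gt0 size_ge8 not_good.
have not_11 : ~~ ((n2 == 1) && (n4 == 1)).
  by move: not_good; rewrite negb_or => /andP [].
case: (leqP 3 n1) => [n1_ge3 | n1_le2]; first exact: nonrichBR_long_run1.
case: (leqP 3 n5) => [n5_ge3 | n5_le2].
  by apply/nonrichBR_mirror/nonrichBR_long_run1; rewrite 1?andbC.
case: (leqP 6 n4) => [n4_ge6 | n4_le5]; first exact: nonrichBR_long_run4.
case: (leqP 6 n2) => [n2_ge6 | n2_le5].
  exact/nonrichBR_mirror/nonrichBR_long_run4.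
case: (leqP 4 n3) => [n3_ge4 | n3_le3]; first by apply: nonrichBR_long_run3; lia.
by apply: small_runs5_nonrichBR; rewrite ?n1_gt0 ?n2_gt0 ?n3_gt0 ?n4_gt0 ?n5_gt0; lia.
Qed.

Lemma good_runs_good_form n1 n2 n3 n4 n5 :
  0 < n1 -> 0 < n2 -> 0 < n3 -> 0 < n4 -> 0 < n5 -> good_runs n1 n2 n3 n4 n5 ->
  good_form (runs5 la n1 n2 n3 n4 n5).
Proof.
move=> n1_gt0 n2_gt0 n3_gt0 n4_gt0 n5_gt0 /orP [/andP [/eqP -> /eqP ->] | ].
  by left; exists n1, n3, n5.
move=> /andP [/eqP sum24 /eqP sum135]; right; exists n2, n4; split => //.
have : [|| (n1, n3, n5) == (1, 1, 2), (n1, n3, n5) == (2, 1, 1)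
         | (n1, n3, n5) == (1, 2, 1)].
  by rewrite !xpair_eqE; lia.
by case/or3P => /eqP [-> -> ->]; [apply: Or31 | apply: Or32 | apply: Or33].
Qed.

Lemma good_four_marks_all_BR_rich_check :
  all (fun n2 => all (fun '(n1, n3, n5) => all_BR_rich (runs5 la n1 n2 n3 (4 - n2) n5))
                     [:: (1, 1, 2); (2, 1, 1); (1, 2, 1)])
      (iota 1 3).
Proof. by vm_compute. Qed.

Lemma good_form_BR_rich w : good_form w -> forall v, inBR w v -> rich v.
Proof.
case=> [[n1 [n3 [n5 [_ _ _ ->]]]] | [n2 [n4 [n2_gt0 n4_gt0 sum24 forms]]]].
  exact: BR_two_marks_rich.
have n2_in : n2 \in iota 1 3 by rewrite mem_iota; lia.
have /allP check := allP good_four_marks_all_BR_rich_check n2 n2_in.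
have n4E : n4 = 4 - n2 by lia.
rewrite n4E in forms.
by case: forms => ->; apply: all_BR_richP;
  [apply: (check (1, 1, 2)) | apply: (check (2, 1, 1)) | apply: (check (1, 2, 1))].
Qed.

Lemma all_BR_rich_good_form n1 n2 n3 n4 n5 :
  0 < n1 -> 0 < n2 -> 0 < n3 -> 0 < n4 -> 0 < n5 -> 8 <= n1 + n2 + n3 + n4 + n5 ->
  (forall v, inBR (runs5 la n1 n2 n3 n4 n5) v -> rich v) ->
  good_form (runs5 la n1 n2 n3 n4 n5).
Proof.
move=> n1_gt0 n2_gt0 n3_gt0 n4_gt0 n5_gt0 size_ge8 BR_rich.
have [good | not_good] := boolP (good_runs n1 n2 n3 n4 n5).
  exact: good_runs_good_form.
have [v BRv] := nonrichBR_not_good n1_gt0 n2_gt0 n3_gt0 n4_gt0 n5_gt0 size_ge8 not_good.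
by case; apply: BR_rich.
Qed.

Definition unrle (rs : seq (bool * nat)) : word := flatten [seq nseq r.2 r.1 | r <- rs].

Lemma rleK w : unrle (rle w) = w.
Proof.
elim: w => //= x s; rewrite /unrle; case: (rle s) => [|[y n] rs] /= <- //.
by case: eqP => [-> | _].
Qed.

Lemma rle_gt0 w : all (fun r => 0 < r.2) (rle w).
Proof.
elim: w => //= x s; case: (rle s) => [|[y n] rs] //= /andP [n_gt0 rs_gt0].
by case: eqP => _ /=; rewrite ?n_gt0 ?rs_gt0.
Qed.

Lemma rle_alternating w : sorted (fun r s => r.1 != s.1) (rle w).
Proof.
elim: w => //= x s; case: (rle s) => [|[y n] rs] //= alt_rs.
by case: eqP => [_ | /eqP neq_xy] /=; [case: rs alt_rs | rewrite neq_xy].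
Qed.

Lemma l5_runs5 w : l w = 5 ->
  exists c n1 n2 n3 n4 n5, [/\ 0 < n1, 0 < n2, 0 < n3, 0 < n4 & 0 < n5] /\
    w = runs5 c n1 n2 n3 n4 n5.
Proof.
rewrite /l => l5; have := rleK w; have := rle_gt0 w; have := rle_alternating w.
case: (rle w) l5 => [|[c1 n1] [|[c2 n2] [|[c3 n3] [|[c4 n4] [|[c5 n5] [|]]]]]] //= _.
move=> alt /and5P [n1_gt0 n2_gt0 n3_gt0 n4_gt0 /andP [n5_gt0 _]] <-.
exists c1, n1, n2, n3, n4, n5; split => //; rewrite /unrle /runs5 /= cats0.
by move: alt; case: c1; case: c2; case: c3; case: c4; case: c5.
Qed.

Lemma compl_runs5 c n1 n2 n3 n4 n5 :
  compl (runs5 c n1 n2 n3 n4 n5) = runs5 (~~ c) n1 n2 n3 n4 n5.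
Proof. by rewrite /compl /runs5 !map_cat !map_nseq negbK. Qed.

Theorem mainTheorem11 (w : seq bool) :
  7 < size w -> l w = 5 ->
  ((forall v, inBR w v -> rich v) <-> (good_form w \/ good_form (compl w))).
Proof.
move=> size_w l5; split; last first.
  case=> [/good_form_BR_rich // | /good_form_BR_rich BR_rich v /inBR_compl BRv].
  by rewrite -rich_compl; apply: BR_rich.
move=> BR_rich.
have [c [n1 [n2 [n3 [n4 [n5 [[n1_gt0 n2_gt0 n3_gt0 n4_gt0 n5_gt0] w_eq]]]]]]] :=
  l5_runs5 l5.
have size_ge8 : 8 <= n1 + n2 + n3 + n4 + n5 by rewrite -(size_runs5 c) -w_eq.
case: c w_eq BR_rich => -> BR_rich; last by left; exact: all_BR_rich_good_form.
right; rewrite compl_runs5; apply: all_BR_rich_good_form => // v.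
by move=> /inBR_compl; rewrite compl_runs5 => /BR_rich; rewrite rich_compl.
Qed.
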